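(* Let $n\ge 2$ and let $X$ be a $\mathcal D$-subspace of $\mathbb P=PG(\mathbb E,\mathbb{F}_q)=PG(n^2-1,q)$. Then there exist two Desarguesian $(n-1)$-spreads $\mathcal D_1(X)$ and $\mathcal D_2(X)$ of $\mathbb P$ such that: (D1) $X\in\mathcal D_i(X)$ and $\mathcal R_i\subset\mathcal D_i(X)$ for $i=1,2$; (D2) for $i=1,2$ there is a linear collineation $\Xi_i$ of $\mathbb P$ fixing $\mathcal D_i(X)$ which induces a semilinear collineation $\tilde\Xi_i$ of order $n$ of $\Pi_{n-1}(\mathcal D_i(X))\cong PG(n-1,q^n)$ whose set of fixed points is exactly $\mathcal R_i$, and $\mathcal R_i$ is a subgeometry of $\Pi_{n-1}(\mathcal D_i(X))$ isomorphic to $PG(n-1,q)$. Moreover there exists an involutory collineation $\Phi$ of $\mathbb P$ such that (D3) $\Phi$ fixes $X$ pointwise, and (D4) $\mathcal D_1(X)^\Phi=\mathcal D_2(X)$.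
   Context: $\mathbb E=\mathrm{End}(\mathbb{F}_{q^n},\mathbb{F}_q)$; $\langle\varphi\rangle_q$ is the point of $\mathbb P$ defined by $\varphi\ne0$; $t_\lambda:x\mapsto\lambda x$. The Segre variety $\mathcal S_{n,n}$ is the set of points $\langle\varphi\rangle_q$ with $\varphi$ of rank 1; its maximal subspaces are $(n-1)$-dimensional and form two systems $\mathcal R_1,\mathcal R_2$, where $\mathcal R_1=\{\{\langle t_\alpha\circ\mathrm{Tr}\circ t_\lambda\rangle_q:\alpha\in\mathbb{F}_{q^n}^*\}:\lambda\in\mathbb{F}_{q^n}^*\}$ and $\mathcal R_2=\{\{\langle t_\lambda\circ\mathrm{Tr}\circ t_\alpha\rangle_q:\alpha\in\mathbb{F}_{q^n}^*\}:\lambda\in\mathbb{F}_{q^n}^*\}$, $\mathrm{Tr}$ the trace $\mathbb{F}_{q^n}\to\mathbb{F}_q$. $H(\mathcal S_{n,n})$ is the subgroup of $PGL(n^2,q)$ fixing each of $\mathcal R_1$ and $\mathcal R_2$. Let $\mathcal I=\{\langle t_\lambda\rangle_q:\lambda\in\mathbb{F}_{q^n}^*\}$, an $(n-1)$-dimensional subspace of $\mathbb P$; a $\mathcal D$-subspace of $\mathbb P$ is any subspace in the orbit of $\mathcal I$ under $H(\mathcal S_{n,n})$. An $(n-1)$-spread of $\mathbb P$ is a partition of its points into $(n-1)$-dimensional subspaces; it is Desarguesian if it arises as the set of subspaces $\{\langle\mathbf v\rangle_{q^n}\}$ viewed over $\mathbb F_q$ when the underlying $\mathbb F_q$-space is endowed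 with an $\mathbb F_{q^n}$-vector space structure. For a Desarguesian $(n-1)$-spread $\mathcal D$ of $\mathbb P$, $\Pi_{n-1}(\mathcal D)$ is the projective space $\cong PG(n-1,q^n)$ whose points are the elements of $\mathcal D$ and whose subspaces are the sets of spread elements contained in subspaces of $\mathbb P$ spanned by spread elements. A subgeometry isomorphic to $PG(n-1,q)$ of $PG(n-1,q^n)$ is the point set defined by an $\mathbb F_q$-subspace of dimension $n$ spanning the underlying $\mathbb F_{q^n}$-space. *)

From HB Require Import structures.
From mathcomp Require Import all_boot all_order all_algebra all_fingroup all_field.
Set Implicit Arguments. Unset Strict Implicit. Unset Printing Implicit Defensive.
Import GRing.Theory.
Local Open Scope ring_scope.

Section SegreDefs.
Variables (F : finFieldType) (L : fieldExtType F).

(* E = End(F_{q^n}, F_q) is the F-vector space 'End(L); points of P are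
   1-dimensional F-subspaces, projective subspaces are F-subspaces. *)

Definition trL (x : L) : L := \sum_(i < \dim {:L}) x ^+ (#|F| ^ i).

Definition tmul (l : L) : 'End(L) := linfun (fun x : L => l * x).

Definition r1map (a l : L) : 'End(L) := linfun (fun x : L => a * trL (l * x)).
Definition r2map (a l : L) : 'End(L) := linfun (fun x : L => l * trL (a * x)).

Definition isR1 (S : {vspace 'End(L)}) : Prop :=
  exists l : L, l != 0 /\ forall phi, phi \in S <-> exists a : L, phi = r1map a l.
Definition isR2 (S : {vspace 'End(L)}) : Prop :=
  exists l : L, l != 0 /\ forall phi, phi \in S <-> exists a : L, phi = r2map a l.

Definition fixes_system (g : 'End('End(L))) (R : {vspace 'End(L)} -> Prop) :=
  forall S, R S <-> R (g @: S)%VS.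

(* X is a D-subspace: X = I^g with g in H(S_{n,n}) *)
Definition Dsubspace (X : {vspace 'End(L)}) : Prop :=
  exists g : 'End('End(L)),
    lker g = 0%VS /\ fixes_system g isR1 /\ fixes_system g isR2 /\
    forall phi, phi \in X <-> exists l : L, phi = g (tmul l).

Definition isSpread (D : {vspace 'End(L)} -> Prop) : Prop :=
  (forall S, D S -> \dim S = \dim {:L}) /\
  (forall v : 'End(L), v != 0 ->
     exists S, [/\ D S, v \in S & forall S', D S' -> v \in S' -> S' = S]).

Definition LStruct (mu : L -> 'End(L) -> 'End(L)) : Prop :=
  [/\ (forall a u v, mu a (u + v) = mu a u + mu a v),
      (forall a (c : F) v, mu a (c *: v) = c *: mu a v),
      (forall a b v, mu (a + b) v = mu a v + mu b v),
      (forall a b v, mu (a * b) v = mu a (mu b v)) &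
      (forall (c : F) v, mu (c%:A) v = c *: v)].

Definition Lspan (mu : L -> 'End(L) -> 'End(L)) (v : 'End(L))
    (S : {vspace 'End(L)}) : Prop :=
  forall w, w \in S <-> exists a : L, w = mu a v.

Definition DesSpreadVia mu (D : {vspace 'End(L)} -> Prop) : Prop :=
  LStruct mu /\ forall S, D S <-> exists v, v != 0 /\ Lspan mu v S.

Definition Subgeometry mu (R : {vspace 'End(L)} -> Prop) : Prop :=
  exists W : {vspace 'End(L)},
    [/\ \dim W = \dim {:L},
        (forall v, exists s : seq (L * 'End(L)),
            all (fun p => p.2 \in W) s /\ v = \sum_(p <- s) mu p.1 p.2) &
        (forall S, R S <-> exists w, [/\ w \in W, w != 0 & Lspan mu w S])].

Definition vimg (g : 'End('End(L))) (S : {vspace 'End(L)}) := (g @: S)%VS.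

Definition DProps (D R : {vspace 'End(L)} -> Prop) (X : {vspace 'End(L)}) : Prop :=
  exists mu, [/\ DesSpreadVia mu D, isSpread D, D X, (forall S, R S -> D S) &
    exists g : 'End('End(L)),
      [/\ lker g = 0%VS /\
          (forall S, D S -> D (vimg g S)),
          (exists sigma : {rmorphism L -> L}, bijective sigma /\
             forall a v, g (mu a v) = mu (sigma a) (g v)),
          ((forall S, D S -> iter (\dim {:L}) (vimg g) S = S) /\
           (forall k, (0 < k < \dim {:L})%N -> exists S, D S /\ iter k (vimg g) S <> S)),
          (forall S, D S -> (vimg g S = S <-> R S)) &
          Subgeometry mu R]].

Definition Collineation (f : 'End(L) -> 'End(L)) : Prop :=
  [/\ bijective f, (forall u v, f (u + v) = f u + f v) &
      exists tau : {rmorphism F -> F}, bijective tau /\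
        forall (c : F) v, f (c *: v) = tau c *: f v].

(* involutory: f^2 induces the identity on points, f does not *)
Definition Involutory (f : 'End(L) -> 'End(L)) : Prop :=
  (forall v, f (f v) \in <[v]>%VS) /\ (exists v, f v \notin <[v]>%VS).

Definition maps_onto (f : 'End(L) -> 'End(L)) (S T : {vspace 'End(L)}) : Prop :=
  forall w, w \in T <-> exists v, v \in S /\ w = f v.

Definition spread_image f (D1 D2 : {vspace 'End(L)} -> Prop) : Prop :=
  (forall S, D1 S -> exists T, D2 T /\ maps_onto f S T) /\
  (forall T, D2 T -> exists S, D1 S /\ maps_onto f S T).

End SegreDefs.

From HB Require Import structures.
From mathcomp Require Import all_boot all_order all_algebra all_fingroup all_field.
From mathcomp Require Import ring.
Set Implicit Arguments. Unset Strict Implicit. Unset Printing Implicit Defensive.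
Import GRing.Theory.
Local Open Scope ring_scope.

(* Everything is done first for X = I, then transported:
   - the standard L-structure a.v = t_a o v on E gives a Desarguesian spread
     containing I and R_1; the map Xi : v |-> Frob o v is semilinear of order n
     and fixes exactly the elements of R_1, which form the subgeometry spanned
     by the trace functionals x |-> Tr(l x).  The key input is that every
     F-valued F-linear map L -> L is a trace functional (nondegeneracy of the
     trace form, obtained by counting roots of polynomials);
   - the transpose Tp for the trace form is an involution of E fixing I
     pointwise and exchanging R_1 and R_2;
   - (D1)-(D2) are invariant under conjugation by an invertible linear map that
     respects R_1 and R_2 ([DProps_conj]).  Then D_1(X) is the standard spread
     moved by g, D_2(X) the standard spread moved by g o Tp, and Phi = g Tp g^-1.
   The file treats in turn: the Frobenius and trace of L/F, trace functionals,
   L-structures and their spreads, transport, the standard spread, the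
   transpose, and finally the theorem. *)

Lemma linfun_linE (K : fieldType) (aT rT : vectType K) (f : aT -> rT)
    (f_lin : forall a u v, f (a *: u + v) = a *: f u + f v) x :
  linfun f x = f x.
Proof.
pose lf : {linear aT -> rT} := HB.pack f (GRing.isLinear.Build K aT rT _ f f_lin).
exact: (lfunE lf x).
Qed.

Section FiniteField.
Variables (F : finFieldType) (L : fieldExtType F).
Local Notation q := #|F|.
Local Notation n := (\dim {:L}).

Lemma q_gt1 : (1 < q)%N. Proof. exact: finNzRing_gt1. Qed.

Lemma dimL_gt0 : (0 < n)%N.
Proof. exact: (adim_gt0 (fullv : {subfield L})). Qed.

Lemma expq_dim (x : L) : x ^+ (q ^ n) = x.
Proof. by apply/eqP; rewrite -(Fermat's_little_theorem (fullv : {subfield L})) memvf. Qed.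

Lemma mem1_frob (x : L) : (x \in 1%VS) = (x ^+ q == x).
Proof. by rewrite (Fermat's_little_theorem (1%AS : {subfield L})) /= dimv1 expn1. Qed.

Definition frobL (x : L) := x ^+ q.

Lemma frobL_is_zmod_morphism : zmod_morphism frobL.
Proof.
rewrite /frobL => x y.
have [p _ pcharFp] := finPcharP F; rewrite (card_pprimeChar pcharFp).
elim: (logn _ _) => // k IHk; rewrite expnSr !exprM {}IHk.
by rewrite -(pchar_lalg L) in pcharFp; rewrite -pFrobenius_autE rmorphB.
Qed.

Lemma frobL_is_monoid_morphism : monoid_morphism frobL.
Proof. by rewrite /frobL; split=> [|x y]; rewrite ?exprMn ?expr1n. Qed.

HB.instance Definition _ :=
  GRing.isZmodMorphism.Build L L frobL frobL_is_zmod_morphism.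
HB.instance Definition _ :=
  GRing.isMonoidMorphism.Build L L frobL frobL_is_monoid_morphism.

Lemma frobL_alg (c : F) : frobL c%:A = c%:A.
Proof. by apply/eqP; rewrite /frobL -mem1_frob rpredZ // memv_line. Qed.

Lemma frobL_is_scalable : scalable frobL.
Proof. by move=> c x; rewrite -[in LHS]mulr_algl rmorphM /= frobL_alg mulr_algl. Qed.

HB.instance Definition _ :=
  GRing.isScalable.Build F L L *:%R frobL frobL_is_scalable.

Lemma iter_frobL k x : iter k frobL x = x ^+ (q ^ k).
Proof. by elim: k => [|k IH] /=; rewrite ?expr1 // IH /frobL -exprM expnSr. Qed.

Lemma iter_frobL_dim x : iter n frobL x = x.
Proof. by rewrite iter_frobL expq_dim. Qed.

Lemma frobL_bij : bijective frobL.
Proof.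
exists (iter n.-1 frobL) => x; last by rewrite -iterS prednK ?dimL_gt0 ?iter_frobL_dim.
by rewrite -iterSr prednK ?dimL_gt0 ?iter_frobL_dim.
Qed.

Lemma frobL_inj : injective frobL. Proof. exact: bij_inj frobL_bij. Qed.

Lemma exists_nonroot (p : {poly L}) :
  p != 0 -> (size p <= q ^ n)%N -> exists x, ~~ root p x.
Proof.
move=> p0 sz_p; have cardL : #|finvect_type L| = (q ^ n)%N.
  rewrite -(card_vspace (fullv : {vspace finvect_type L})).
  by apply: eq_card => x; rewrite memvf.
case: (boolP (all (root p) (enum (finvect_type L)))) => [allr | /allPn [x _ nr]].
  have : (#|finvect_type L| < size p)%N.
    by rewrite cardT; exact: max_poly_roots p0 allr (enum_uniq _).
  by rewrite cardL ltnNge sz_p.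
by exists x.
Qed.

Lemma size_Xq_le k : (size ('X^(q ^ k) : {poly L}) <= q ^ n)%N = (k < n)%N.
Proof. by rewrite size_polyXn ltn_exp2l // q_gt1. Qed.

Lemma frobL_iter_nontrivial k : (0 < k < n)%N -> exists x : L, x ^+ (q ^ k) != x.
Proof.
case/andP=> k_gt0 k_lt_n.
have qk_gt1 : (1 < q ^ k)%N by rewrite -{1}(expn0 q) ltn_exp2l //; exact: q_gt1.
have [x] : exists x : L, ~~ root ('X^(q ^ k) - 'X) x; last first.
  by rewrite /root !hornerE subr_eq0; exists x.
apply: exists_nonroot.
- rewrite subr_eq0; apply/eqP => /(congr1 (fun p : {poly L} => size p)).
  by rewrite size_polyXn size_polyX => -[qk1]; rewrite qk1 in qk_gt1.
- by rewrite size_polyDl ?size_Xq_le // size_polyN size_polyX size_polyXn ltnS.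
Qed.

Lemma exists_notin1 : (1 < n)%N -> exists a : L, a \notin 1%VS.
Proof.
move=> n_gt1; have [|a ha] := @frobL_iter_nontrivial 1; first by rewrite n_gt1.
by exists a; rewrite mem1_frob -(expn1 q).
Qed.

End FiniteField.

Section Trace.
Variables (F : finFieldType) (L : fieldExtType F).
Local Notation q := #|F|.
Local Notation n := (\dim {:L}).
Local Notation E := 'End(L).
Local Notation trace := (@trL F L).
Local Notation frob := (@frobL F L).

Lemma trL_frobE (x : L) : trL x = \sum_(i < n) iter i frob x.
Proof. by apply: eq_bigr => i _; rewrite iter_frobL. Qed.

Lemma iter_frobL_is_linear k : linear (iter k frob).
Proof. by elim: k => [//|k IH] c u v; rewrite /= IH linearP. Qed.

Lemma trL_is_linear : linear trace.
Proof.
move=> c u v; rewrite !trL_frobE scaler_sumr -big_split /=.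
by apply: eq_bigr => i _; rewrite iter_frobL_is_linear.
Qed.

HB.instance Definition _ := GRing.isLinear.Build F L L *:%R trace trL_is_linear.

Lemma frobL_trL (x : L) : frobL (trL x) = trL x.
Proof.
rewrite trL_frobE rmorph_sum /=; have := @dimL_gt0 F L; case Dn: n => [//|m] _.
by rewrite big_ord_recr big_ord_recl /= -iterS -Dn iter_frobL_dim addrC.
Qed.

Lemma trL_in1 (x : L) : trL x \in 1%VS.
Proof. by rewrite mem1_frob; apply/eqP; exact: frobL_trL. Qed.

Lemma trL_mul1 (t y : L) : t \in 1%VS -> trL (t * y) = t * trL y.
Proof. by case/vlineP=> c ->; rewrite !mulr_algl linearZ. Qed.

(* The trace form is not identically zero: the trace polynomial has too
   small a degree to vanish on all of L. *)
Lemma trL_neq0 : exists x : L, trL x != 0.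
Proof.
pose i0 : 'I_n := Ordinal (@dimL_gt0 F L).
have [x] : exists x : L, ~~ root (\sum_(i < n) 'X^(q ^ i)) x; last first.
  move=> nr; exists x; move: nr; rewrite /root horner_sum trL_frobE.
  by under eq_bigr do rewrite hornerXn -iter_frobL.
apply: exists_nonroot.
- apply/eqP => /(congr1 (coefp 1)); rewrite /= coef_sum coef0 (bigD1 i0) //=.
  rewrite coefXn expn0 eqxx big1 ?addr0 => [/eqP|i ne_i_i0]; first by rewrite oner_eq0.
  rewrite coefXn -(expn0 q) eqn_exp2l ?q_gt1 // eq_sym.
  suff /negbTE -> : i != 0%N :> nat by [].
  by apply: contra ne_i_i0 => /eqP i0E; apply/eqP/val_inj.
apply: (big_ind (fun p : {poly L} => size p <= q ^ n)%N) => [|p r|i _].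
- by rewrite size_poly0.
- by move=> sz_p sz_r; rewrite (leq_trans (size_polyD _ _)) // geq_max sz_p.
by rewrite size_Xq_le.
Qed.

Definition trl (l : L) : E := linfun (fun x : L => trL (l * x)).

Lemma trlE (l x : L) : trl l x = trL (l * x).
Proof. by rewrite linfun_linE // => c u v; rewrite mulrDr -scalerAr linearP. Qed.

Lemma trl_is_linear : linear trl.
Proof.
move=> c u v; apply/lfunP => x.
by rewrite add_lfunE scale_lfunE !trlE mulrDl -scalerAl linearP.
Qed.

HB.instance Definition _ := GRing.isLinear.Build F L E *:%R trl trl_is_linear.

Lemma trl_in1 (l x : L) : trl l x \in 1%VS.
Proof. by rewrite trlE trL_in1. Qed.

Lemma trl_inj : injective trl.
Proof.
apply: raddf_inj => l /lfunP trl_l0; apply: contraTeq isT => l_neq0.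
have [x0 tr_x0] := trL_neq0.
have := trl_l0 (l^-1 * x0); rewrite trlE mulrA mulfV // mul1r zero_lfunE.
by move/eqP; rewrite (negbTE tr_x0).
Qed.

Lemma trl_eq0 (l : L) : (trl l == 0) = (l == 0).
Proof. exact: raddf_eq0 trl_inj. Qed.

Definition trace_fns : {vspace E} := limg (linfun trl).

Lemma mem_trace_fns (phi : E) : reflect (exists l, phi = trl l) (phi \in trace_fns).
Proof.
apply: (iffP memv_imgP) => [[l _ ->]|[l ->]]; exists l; rewrite ?lfunE //.
by rewrite memvf.
Qed.

Lemma dim_trace_fns : \dim trace_fns = n.
Proof.
rewrite limg_dim_eq // (_ : lker _ = 0%VS) ?capv0 //.
by apply/eqP/lker0P => a b; rewrite !lfunE; exact: trl_inj.
Qed.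

(* A space of F-valued maps L -> L has dimension at most n: evaluation on a
   basis of L embeds it into L. *)
Lemma dim_Fvalued (V : {vspace E}) :
  (forall phi, phi \in V -> forall x, phi x \in 1%VS) -> (\dim V <= n)%N.
Proof.
move=> V_F; pose e := vbasis (fullv : {vspace L}).
pose ev : 'Hom(E, L) := linfun (fun phi : E => \sum_(i < n) phi e`_i * e`_i).
have evE phi : ev phi = \sum_(i < n) phi e`_i * e`_i.
  rewrite linfun_linE // => c u v; rewrite scaler_sumr -big_split /=.
  by apply: eq_bigr => i _; rewrite add_lfunE scale_lfunE mulrDl scalerAl.
suff ev_inj : (V :&: lker ev = 0)%VS by rewrite -(limg_dim_eq ev_inj) dimvS ?subvf.
apply/eqP; rewrite -subv0; apply/subvP => phi; rewrite memv_cap memv_ker memv0.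
case/andP=> /V_F phi_F /eqP ev_phi0.
have /fin_all_exists [c phi_e] : forall i : 'I_n, exists c : F, phi e`_i = c%:A.
  by move=> i; apply/vlineP; exact: phi_F.
have c0 : forall i, c i = 0.
  apply: (freeP (basis_free (vbasisP fullv))); rewrite -[RHS]ev_phi0 evE.
  by apply: eq_bigr => i _; rewrite phi_e mulr_algl.
apply/eqP/lfunP => x; rewrite zero_lfunE (coord_vbasis (memvf x)) linear_sum.
by rewrite big1 // => i _; rewrite linearZ /= phi_e c0 scale0r scaler0.
Qed.

Lemma Fvalued_trl (f : E) : (forall x, f x \in 1%VS) -> exists l, f = trl l.
Proof.
move=> f_F; apply/mem_trace_fns.
have V_F phi : phi \in (trace_fns + <[f]>)%VS -> forall x, phi x \in 1%VS.
  case/memv_addP => _ /mem_trace_fns [l ->] [g /vlineP [c ->] ->] x.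
  by rewrite add_lfunE scale_lfunE rpredD ?rpredZ ?trl_in1.
have: trace_fns = (trace_fns + <[f]>)%VS.
  by apply/eqP; rewrite eqEdim addvSl dim_trace_fns dim_Fvalued.
by move=> ->; apply: subvP (addvSr _ _) _ (memv_line f).
Qed.

End Trace.

Section LStructures.
Variables (F : finFieldType) (L : fieldExtType F).
Local Notation n := (\dim {:L}).
Local Notation E := 'End(L).

Definition Lspread (mu : L -> E -> E) (S : {vspace E}) : Prop :=
  exists v, v != 0 /\ Lspan mu v S.

Section OneStructure.
Variable mu : L -> E -> E.
Hypothesis mu_struct : LStruct mu.

Lemma mu_mul a b v : mu (a * b) v = mu a (mu b v).
Proof. by case: mu_struct. Qed.

Lemma mu_alg (c : F) v : mu c%:A v = c *: v.
Proof. by case: mu_struct. Qed.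

Lemma mu_1 v : mu 1 v = v.
Proof. by have := mu_alg 1 v; rewrite !scale1r. Qed.

Lemma mu_0 v : mu 0 v = 0.
Proof. by have := mu_alg 0 v; rewrite !scale0r. Qed.

Lemma mu_v0 a : mu a 0 = 0.
Proof.
by case: mu_struct => _ mu_scal _ _ _; have := mu_scal a 0 0; rewrite !scale0r.
Qed.

Lemma mu_linear_in_scalar (c : F) a b v : mu (c *: a + b) v = c *: mu a v + mu b v.
Proof.
by case: mu_struct => _ _ mu_addl _ _; rewrite mu_addl -mulr_algl mu_mul mu_alg.
Qed.

Lemma Lspan_scale d w S : d != 0 -> Lspan mu (mu d w) S -> Lspan mu w S.
Proof.
move=> d_neq0 dwS u; rewrite dwS.
split=> -[a ->]; first by exists (a * d); rewrite mu_mul.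
by exists (a / d); rewrite -mu_mul divfK.
Qed.

Definition Lline v : 'Hom(L, E) := linfun (fun a => mu a v).

Lemma LlineE v a : Lline v a = mu a v.
Proof. by rewrite linfun_linE // => c a' b; rewrite mu_linear_in_scalar. Qed.

Lemma Lspan_Lline v : Lspan mu v (limg (Lline v)).
Proof.
move=> w; split => [/memv_imgP [a _ ->]|[a ->]]; first by exists a; rewrite LlineE.
by rewrite -LlineE memv_img ?memvf.
Qed.

Lemma Lspan_uniq v S T : Lspan mu v S -> Lspan mu v T -> S = T.
Proof. by move=> vS vT; apply/vspaceP => w; apply/idP/idP => [/vS /vT|/vT /vS]. Qed.

Lemma dim_Lspan v S : v != 0 -> Lspan mu v S -> \dim S = n.
Proof.
move=> v_neq0 vS; rewrite (Lspan_uniq vS (Lspan_Lline v)) limg_dim_eq //.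
apply/eqP; rewrite -subv0; apply/subvP => a; rewrite memv_cap memv_ker LlineE memv0.
case/andP=> _ /eqP mu_av0; apply: contraTT v_neq0 => a_neq0.
by rewrite negbK -(mu_1 v) -(mulVf a_neq0) mu_mul mu_av0 mu_v0.
Qed.

Lemma isSpread_Lspread : isSpread (Lspread mu).
Proof.
split=> [S [v [v_neq0 vS]]|v v_neq0]; first exact: dim_Lspan vS.
exists (limg (Lline v)); split; first by exists v; split=> //; exact: Lspan_Lline.
  by apply/Lspan_Lline; exists 1; rewrite mu_1.
move=> S' [w [_ wS']] /wS' [a va].
have a_neq0 : a != 0 by apply: contraNneq v_neq0 => a0; rewrite va a0 mu_0.
apply: (Lspan_uniq _ (Lspan_Lline v)) => u; rewrite wS'.
split=> [[b ->]|[b ->]]; first by exists (b / a); rewrite va -mu_mul divfK.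
by exists (b * a); rewrite va mu_mul.
Qed.

End OneStructure.

Lemma isSpread_DesSpreadVia (mu : L -> E -> E) (D : {vspace E} -> Prop) :
  DesSpreadVia mu D -> isSpread D.
Proof.
case=> mu_struct DE; have [dimD partD] := isSpread_Lspread mu_struct.
split=> [S /DE|v /partD [S [/DE DS vS uniqS]]]; first exact: dimD.
by exists S; split=> // S' /DE; exact: uniqS.
Qed.

Lemma Lspan_semilinear (sigma : L -> L) (mu mu' : L -> E -> E) (f : 'End(E)) v S :
  (forall b, exists a, b = sigma a) ->
  (forall a, f (mu a v) = mu' (sigma a) (f v)) ->
  Lspan mu v S -> Lspan mu' (f v) (vimg f S).
Proof.
move=> sigma_onto f_semi vS w; split=> [/memv_imgP [u /vS [a ->] ->]|[b ->]].
  by exists (sigma a).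
by have [a ->] := sigma_onto b; rewrite -f_semi memv_img //; apply/vS; exists a.
Qed.

Lemma vimg_comp (f g : 'End(E)) S : vimg (f \o g)%VF S = vimg f (vimg g S).
Proof. exact: limg_comp. Qed.

Lemma vimg_cancel (f f' : 'End(E)) : cancel f f' -> forall S, vimg f' (vimg f S) = S.
Proof.
move=> fK S; rewrite -vimg_comp /vimg (_ : (f' \o f)%VF = \1%VF) ?lim1g //.
by apply/lfunP => v; rewrite comp_lfunE id_lfunE fK.
Qed.

Lemma cancel_neq0 (f f' : 'End(E)) v : cancel f f' -> v != 0 -> f v != 0.
Proof. by move=> fK; apply: contraNneq => fv0; rewrite -(fK v) fv0 linear0. Qed.

Lemma comp_cancel (f f' g g' : 'End(E)) :
  cancel f f' -> cancel g g' -> cancel (g \o f)%VF (f' \o g')%VF.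
Proof. by move=> fK gK v; rewrite !comp_lfunE gK fK. Qed.

End LStructures.

Section Transport.
Variables (F : finFieldType) (L : fieldExtType F).
Local Notation E := 'End(L).

Variables g h : 'End(E).
Hypotheses (ghK : cancel h g) (hgK : cancel g h).

Lemma vimg_gh S : vimg g (vimg h S) = S. Proof. exact: vimg_cancel. Qed.
Lemma vimg_hg S : vimg h (vimg g S) = S. Proof. exact: vimg_cancel. Qed.

Lemma lker_inv : lker g = 0%VS.
Proof. by apply/eqP/lker0P; exact: can_inj hgK. Qed.

Definition conj_mu (mu : L -> E -> E) (a : L) (v : E) : E := g (mu a (h v)).

Lemma LStruct_conj (mu : L -> E -> E) : LStruct mu -> LStruct (conj_mu mu).
Proof.
case=> mu_addr mu_scal mu_addl mu_mul mu_alg; rewrite /conj_mu; split.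
- by move=> a u v; rewrite linearD /= mu_addr linearD.
- by move=> a c v; rewrite linearZ /= mu_scal linearZ.
- by move=> a b v; rewrite mu_addl linearD.
- by move=> a b v; rewrite mu_mul hgK.
- by move=> c v; rewrite mu_alg linearZ /= ghK.
Qed.

Lemma Lspan_conj (mu : L -> E -> E) v S :
  Lspan (conj_mu mu) v S <-> Lspan mu (h v) (vimg h S).
Proof.
have id_onto (b : L) : exists a, b = id a by exists b.
split=> vS.
  by apply: (Lspan_semilinear (sigma := id)) vS => // a; rewrite /conj_mu hgK.
rewrite -(vimg_gh S) -(ghK v).
by apply: (Lspan_semilinear (sigma := id)) vS => // a; rewrite /conj_mu !hgK.
Qed.

Lemma Lspread_conj (mu : L -> E -> E) S :
  Lspread (conj_mu mu) S <-> Lspread mu (vimg h S).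
Proof.
split=> [[v [v_neq0 /Lspan_conj vS]]|[v [v_neq0 vS]]].
  by exists (h v); split=> //; exact: cancel_neq0 ghK v_neq0.
by exists (g v); split; [exact: cancel_neq0 hgK v_neq0 | apply/Lspan_conj; rewrite hgK].
Qed.

Lemma DesSpreadVia_conj (mu : L -> E -> E) D :
  DesSpreadVia mu D -> DesSpreadVia (conj_mu mu) (fun S => D (vimg h S)).
Proof.
case=> mu_struct DE; split; first exact: LStruct_conj.
by move=> S; apply: iff_trans (DE _) (iff_sym (Lspread_conj mu S)).
Qed.

Variables (R R' : {vspace E} -> Prop).
Hypothesis R'E : forall S, R' S <-> R (vimg h S).

Lemma Subgeometry_conj (mu : L -> E -> E) :
  Subgeometry mu R -> Subgeometry (conj_mu mu) R'.
Proof.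
case=> W [dimW spanW RE]; exists (vimg g W); split.
- by rewrite /vimg limg_dim_eq // lker_inv capv0.
- move=> v; have [s [sW hvE]] := spanW (h v).
  exists [seq (p.1, g p.2) | p <- s]; split.
    by rewrite all_map; apply/allP => p ps /=; rewrite memv_img // (allP sW).
  rewrite -(ghK v) hvE linear_sum big_map.
  by apply: eq_bigr => p _; rewrite /conj_mu hgK.
move=> S; rewrite R'E RE.
split=> [[w [wW w_neq0 wS]]|[w [wW w_neq0 /Lspan_conj wS]]].
  exists (g w); split; [exact: memv_img | exact: cancel_neq0 hgK w_neq0 |].
  by apply/Lspan_conj; rewrite hgK.
exists (h w); split=> //; last exact: cancel_neq0 ghK w_neq0.
by case/memv_imgP: wW => u uW ->; rewrite hgK.
Qed.

Lemma iter_vimg_conj (Xi : 'End(E)) k S :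
  iter k (vimg (g \o Xi \o h)%VF) S = vimg g (iter k (vimg Xi) (vimg h S)).
Proof.
elim: k => [|k IH] /=; first by rewrite vimg_gh.
by rewrite IH !vimg_comp vimg_hg.
Qed.

Lemma DProps_conj D X : DProps D R X -> DProps (fun S => D (vimg h S)) R' (vimg g X).
Proof.
case=> mu' [Dmu' _ DX RD [Xi [[kerXi XiD] [sigma [sigma_bij Xi_semi]]
                            [Xi_order Xi_nontriv] Xi_fix subgeo]]].
exists (conj_mu mu'); split.
- exact: DesSpreadVia_conj.
- exact: isSpread_DesSpreadVia (DesSpreadVia_conj Dmu').
- by rewrite vimg_hg.
- by move=> S /R'E /RD.
exists (g \o Xi \o h)%VF; split.
- split; last by move=> S DS; rewrite !vimg_comp vimg_hg; exact: XiD.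
  have Xi_inj : injective Xi by apply/lker0P/eqP.
  apply/eqP/lker0P => u v; rewrite !comp_lfunE.
  by move=> /(can_inj hgK) /Xi_inj /(can_inj ghK).
- by exists sigma; split=> // a v; rewrite /conj_mu !comp_lfunE hgK Xi_semi hgK.
- split=> [S DS|k k_range]; first by rewrite iter_vimg_conj Xi_order // vimg_gh.
  have [S [DS S_moved]] := Xi_nontriv k k_range.
  exists (vimg g S); split; first by rewrite vimg_hg.
  by rewrite iter_vimg_conj vimg_hg => /(congr1 (vimg h)); rewrite !vimg_hg.
- move=> S DS; rewrite R'E -(Xi_fix _ DS) !vimg_comp.
  by split=> [fixS|->]; [rewrite -{2}fixS vimg_hg | rewrite vimg_gh].
exact: Subgeometry_conj.
Qed.

End Transport.

Section StandardSpread.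
Variables (F : finFieldType) (L : fieldExtType F).
Local Notation q := #|F|.
Local Notation n := (\dim {:L}).
Local Notation E := 'End(L).
Local Notation tmul := (@tmul F L).
Local Notation frob := (@frobL F L).

Lemma tmulE (l x : L) : tmul l x = l * x.
Proof. by rewrite linfun_linE // => c u v; rewrite mulrDr -scalerAr. Qed.

Lemma tmul_is_linear : linear tmul.
Proof.
move=> c a b; apply/lfunP => x.
by rewrite add_lfunE scale_lfunE !tmulE mulrDl scalerAl.
Qed.

HB.instance Definition _ := GRing.isLinear.Build F L E *:%R tmul tmul_is_linear.

Lemma tmulM (a b : L) : tmul (a * b) = (tmul a \o tmul b)%VF.
Proof. by apply/lfunP => x; rewrite comp_lfunE !tmulE mulrA. Qed.

Lemma tmul1 : tmul 1 = \1%VF.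
Proof. by apply/lfunP => x; rewrite tmulE mul1r id_lfunE. Qed.

Lemma id_lfun_neq0 : \1%VF != 0 :> E.
Proof.
apply/eqP => /lfunP /(_ 1); rewrite id_lfunE zero_lfunE.
by apply/eqP; exact: oner_neq0.
Qed.

Lemma lfun_neq0P (v : E) : v != 0 -> exists x, v x != 0.
Proof.
move=> v_neq0; have /subvPn [x _ x_ker] : ~~ (fullv <= lker v)%VS.
  apply: contra v_neq0 => /subvP kerv; apply/eqP/lfunP => x.
  by rewrite zero_lfunE; apply/eqP; rewrite -memv_ker kerv ?memvf.
by exists x; rewrite -memv_ker.
Qed.

Definition mu_std (a : L) (v : E) : E := (tmul a \o v)%VF.

Lemma LStruct_std : LStruct mu_std.
Proof.
rewrite /mu_std; split=> [a u v|a c v|a b v|a b v|c v].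
- by rewrite comp_lfunDr.
- by rewrite comp_lfunZr.
- by rewrite linearD comp_lfunDl.
- by rewrite tmulM comp_lfunA.
- by rewrite linearZ /= tmul1 -comp_lfunZl comp_lfun1l.
Qed.

Definition Iv : {vspace E} := limg (linfun tmul).

Lemma mem_Iv w : reflect (exists a, w = tmul a) (w \in Iv).
Proof.
by apply: (iffP memv_imgP) => [[a _ ->]|[a ->]]; exists a; rewrite ?lfunE ?memvf.
Qed.

Lemma Lspan_Iv : Lspan mu_std \1%VF Iv.
Proof.
move=> w; split=> [/mem_Iv [a ->]|[a ->]]; [exists a|apply/mem_Iv; exists a];
  by rewrite /mu_std comp_lfun1r.
Qed.

Lemma r1mapE (a l x : L) : r1map a l x = a * trL (l * x).
Proof.
by rewrite linfun_linE // => c u v; rewrite mulrDr -scalerAr linearP mulrDr -scalerAr.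
Qed.

Lemma r2mapE (a l x : L) : r2map a l x = l * trL (a * x).
Proof.
by rewrite linfun_linE // => c u v; rewrite mulrDr -scalerAr linearP mulrDr -scalerAr.
Qed.

Lemma r1map_std (a l : L) : r1map a l = mu_std a (trl l).
Proof. by apply/lfunP => x; rewrite comp_lfunE tmulE trlE r1mapE. Qed.

Lemma isR1_Lspan S : isR1 S <-> exists2 l, l != 0 & Lspan mu_std (trl l) S.
Proof.
rewrite /isR1 /Lspan; split=> [[l [l_neq0 lS]]|[l l_neq0 lS]]; exists l => //;
  [|split=> //] => phi; rewrite ?lS; split=> -[a ->]; exists a; by rewrite r1map_std.
Qed.

Definition Xi_std : 'End(E) := linfun (fun v : E => (linfun frob \o v)%VF).

Lemma Xi_stdE v x : Xi_std v x = frobL (v x).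
Proof.
rewrite linfun_linE ?comp_lfunE ?lfunE // => c u w.
by rewrite comp_lfunDr comp_lfunZr.
Qed.

Lemma iter_Xi_std k v x : iter k Xi_std v x = iter k frob (v x).
Proof. by elim: k => [//|k IH] /=; rewrite Xi_stdE IH. Qed.

Lemma lker_Xi_std : lker Xi_std = 0%VS.
Proof.
apply/eqP/lker0P => u v /lfunP Xi_uv; apply/lfunP => x.
by apply: (@frobL_inj F L); rewrite -!Xi_stdE Xi_uv.
Qed.

Lemma Xi_std_semilinear a v : Xi_std (mu_std a v) = mu_std (frobL a) (Xi_std v).
Proof.
by apply/lfunP => x; rewrite Xi_stdE /mu_std !comp_lfunE !tmulE Xi_stdE rmorphM.
Qed.

Lemma frobL_onto (b : L) : exists a, b = frobL a.
Proof. by have [g _ gK] := @frobL_bij F L; exists (g b); rewrite gK. Qed.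

Lemma Lspan_iter_Xi_std k v S :
  Lspan mu_std v S -> Lspan mu_std (iter k Xi_std v) (iter k (vimg Xi_std) S).
Proof.
elim: k => [//|k IH] vS /=.
apply: Lspan_semilinear (IH vS) => [|a]; first exact: frobL_onto.
exact: Xi_std_semilinear.
Qed.

Lemma Lspread_Xi_std S : Lspread mu_std S -> Lspread mu_std (vimg Xi_std S).
Proof.
case=> v [v_neq0 vS]; exists (Xi_std v); split; last exact: Lspan_iter_Xi_std 1 _ _ vS.
by apply: contraNneq v_neq0 => /eqP; rewrite -memv_ker lker_Xi_std memv0.
Qed.

Lemma Xi_std_order S : Lspread mu_std S -> iter n (vimg Xi_std) S = S.
Proof.
case=> v [_ vS]; have := Lspan_iter_Xi_std n vS.
have -> : iter n Xi_std v = v by apply/lfunP => x; rewrite iter_Xi_std iter_frobL_dim.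
by move/(Lspan_uniq vS) <-.
Qed.

Lemma Xi_std_moves_Iv k : (0 < k < n)%N -> iter k (vimg Xi_std) Iv <> Iv.
Proof.
move=> k_range Iv_fixed; have [x frob_x] := frobL_iter_nontrivial k_range.
have := Lspan_iter_Xi_std k Lspan_Iv; rewrite Iv_fixed => Xi_Iv.
have /Lspan_Iv [c cE] : iter k Xi_std \1%VF \in Iv.
  by apply/Xi_Iv; exists 1; rewrite (mu_1 LStruct_std).
move: (congr1 (fun f : E => f x) cE) (congr1 (fun f : E => f 1) cE).
rewrite !iter_Xi_std /mu_std !comp_lfunE !id_lfunE !tmulE !iter_frobL expr1n mulr1.
by move=> xE c1; rewrite xE -c1 mul1r eqxx in frob_x.
Qed.

Lemma Xi_std_trl l : Xi_std (trl l) = trl l.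
Proof. by apply/lfunP => x; rewrite Xi_stdE trlE frobL_trL. Qed.

(* A nonzero v whose L-line is Xi-stable is an L-multiple of a trace
   functional: x |-> v x / v x0 is then F-valued. *)
Lemma Xi_stable_trl v c : v != 0 -> Xi_std v = mu_std c v ->
  exists2 d, d != 0 & exists l, v = mu_std d (trl l).
Proof.
move=> v_neq0 Xi_v; have [x0 vx0_neq0] := lfun_neq0P v_neq0.
have frob_v x : v x ^+ q = c * v x.
  by have := congr1 (fun f : E => f x) Xi_v; rewrite Xi_stdE /mu_std comp_lfunE tmulE.
have c_neq0 : c != 0.
  apply: contraNneq vx0_neq0 => c0; have := frob_v x0; rewrite c0 mul0r => /eqP.
  by rewrite expf_eq0 => /andP[].
have [l lE] : exists l, mu_std (v x0)^-1 v = trl l.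
  apply: Fvalued_trl => x; rewrite /mu_std comp_lfunE tmulE mem1_frob exprMn exprVn.
  by rewrite !frob_v; apply/eqP; field; rewrite c_neq0 vx0_neq0.
exists (v x0) => //; exists l.
by rewrite -lE /mu_std comp_lfunA -tmulM mulfV // tmul1 comp_lfun1l.
Qed.

Lemma Xi_std_fixed S : Lspread mu_std S -> (vimg Xi_std S = S <-> isR1 S).
Proof.
case=> v [v_neq0 vS]; rewrite isR1_Lspan; split=> [fixS|[l _ lS]].
  have /vS [c Xi_v] : Xi_std v \in S.
    by rewrite -fixS memv_img //; apply/vS; exists 1; rewrite (mu_1 LStruct_std).
  have [d d_neq0 [l vE]] := Xi_stable_trl v_neq0 Xi_v.
  exists l; last by apply: (Lspan_scale LStruct_std d_neq0); rewrite -vE.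
  by apply: contraNneq v_neq0 => l0; rewrite vE l0 linear0 /mu_std comp_lfun0r.
have := Lspan_iter_Xi_std 1 lS; rewrite /= Xi_std_trl.
by move/(Lspan_uniq lS) <-.
Qed.

(* R_1 is the subgeometry spanned by the n-dimensional F-space of trace
   functionals: v = sum_i e_i (coord_i o v), and each coord_i o v is F-valued. *)
Lemma Subgeometry_std : Subgeometry mu_std (@isR1 F L).
Proof.
exists (trace_fns L); split; first exact: dim_trace_fns.
- move=> v; pose e := vbasis (fullv : {vspace L}).
  have coordE i : linfun (fun x : L => (coord e i (v x))%:A : L) =1
                   fun x => (coord e i (v x))%:A.
    by apply: linfun_linE => c a b; rewrite linearP /= linearP /= scalerDl scalerA.
  have /fin_all_exists [l lE] : forall i : 'I_n,
      exists l, linfun (fun x : L => (coord e i (v x))%:A : L) = trl l.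
    by move=> i; apply: Fvalued_trl => x; rewrite coordE rpredZ // memv_line.
  exists [seq (e`_i, trl (l i)) | i : 'I_n <- index_enum 'I_n]; split.
    by rewrite all_map; apply/allP => i _ /=; apply/mem_trace_fns; exists (l i).
  rewrite big_map; apply/lfunP => x; rewrite sum_lfunE {1}(coord_vbasis (memvf (v x))).
  by apply: eq_bigr => i _; rewrite /mu_std comp_lfunE tmulE -lE coordE mulr_algr.
move=> S; rewrite isR1_Lspan.
split=> [[l l_neq0 lS]|[w [/mem_trace_fns [l ->] trl_neq0 lS]]].
  by exists (trl l); split; [apply/mem_trace_fns; exists l | rewrite trl_eq0 |].
by exists l => //; apply: contraNneq trl_neq0 => ->; rewrite linear0.
Qed.

Lemma DProps_std : DProps (Lspread mu_std) (@isR1 F L) Iv.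
Proof.
have spread_std : DesSpreadVia mu_std (Lspread mu_std) by split=> //; exact: LStruct_std.
exists mu_std; split=> //.
- exact: isSpread_DesSpreadVia spread_std.
- by exists \1%VF; split; [exact: id_lfun_neq0 | exact: Lspan_Iv].
- by move=> S /isR1_Lspan [l l_neq0 lS]; exists (trl l); rewrite trl_eq0.
exists Xi_std; split.
- by split; [exact: lker_Xi_std | exact: Lspread_Xi_std].
- by exists frob; split; [exact: frobL_bij | exact: Xi_std_semilinear].
- split=> [|k k_range]; first exact: Xi_std_order.
  exists Iv; split; last exact: Xi_std_moves_Iv.
  by exists \1%VF; split; [exact: id_lfun_neq0 | exact: Lspan_Iv].
- exact: Xi_std_fixed.
exact: Subgeometry_std.
Qed.

End StandardSpread.

Section Transpose.
Variables (F : finFieldType) (L : fieldExtType F).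
Local Notation n := (\dim {:L}).
Local Notation E := 'End(L).

(* The transpose of phi for the nondegenerate trace form (x, y) |-> Tr(x y):
   y |-> the l with Tr(l x) = Tr(y phi(x)), which exists by [Fvalued_trl]. *)
Lemma transpose_ex (phi : E) (y : L) : exists l, (trl y \o phi)%VF == trl l.
Proof.
have [l lE] : exists l, (trl y \o phi)%VF = trl l.
  by apply: Fvalued_trl => x; rewrite comp_lfunE trl_in1.
by exists l; rewrite lE.
Qed.

Definition transpose_at (phi : E) (y : L) : L := xchoose (transpose_ex phi y).

Lemma transpose_atP (phi : E) (y : L) : trl (transpose_at phi y) = (trl y \o phi)%VF.
Proof. by have /eqP := xchooseP (transpose_ex phi y). Qed.

Lemma transpose_at_is_linear (phi : E) : linear (transpose_at phi).
Proof.
move=> c a b; apply: (@trl_inj F L).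
by rewrite linearP /= !transpose_atP linearP /= comp_lfunDl -comp_lfunZl.
Qed.

Definition transpose_fn (phi : E) : E := linfun (transpose_at phi).

Lemma transpose_fnE (phi : E) (y : L) : transpose_fn phi y = transpose_at phi y.
Proof. exact/linfun_linE/transpose_at_is_linear. Qed.

Lemma transpose_fn_is_linear : linear transpose_fn.
Proof.
move=> c phi psi; apply/lfunP => y; rewrite add_lfunE scale_lfunE !transpose_fnE.
by apply: (@trl_inj F L); rewrite linearP /= !transpose_atP comp_lfunDr -comp_lfunZr.
Qed.

Definition Tp : 'End(E) := linfun transpose_fn.

Lemma TpP (phi : E) (x y : L) : trL (Tp phi y * x) = trL (y * phi x).
Proof.
have := congr1 (fun f : E => f x) (transpose_atP phi y).
rewrite trlE comp_lfunE trlE => <-.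
by rewrite linfun_linE ?transpose_fnE //; exact: transpose_fn_is_linear.
Qed.

Lemma Tp_uniq (phi psi : E) :
  (forall x y, trL (psi y * x) = trL (y * phi x)) -> Tp phi = psi.
Proof.
move=> psiP; apply/lfunP => y; apply: (@trl_inj F L); apply/lfunP => x.
by rewrite !trlE TpP psiP.
Qed.

Lemma TpK : cancel Tp Tp.
Proof. by move=> phi; apply: Tp_uniq => x y; rewrite [y * _]mulrC TpP mulrC. Qed.

Lemma Tp_tmul (a : L) : Tp (tmul a) = tmul a.
Proof. by apply: Tp_uniq => x y; rewrite !tmulE mulrA [y * a]mulrC. Qed.

Lemma Tp_Iv : vimg Tp (Iv L) = Iv L.
Proof.
apply/vspaceP => w; apply/memv_imgP/mem_Iv => [[u /mem_Iv [a ->] ->]|[a ->]].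
  by exists a; rewrite Tp_tmul.
by exists (tmul a); rewrite ?Tp_tmul //; apply/mem_Iv; exists a.
Qed.

Lemma Tp_r1map (a l : L) : Tp (r1map a l) = r2map a l.
Proof.
apply: Tp_uniq => x y; rewrite r1mapE r2mapE.
have -> : l * trL (a * y) * x = trL (a * y) * (l * x) by ring.
have -> : y * (a * trL (l * x)) = trL (l * x) * (a * y) by ring.
by rewrite [LHS]trL_mul1 ?[RHS]trL_mul1 ?trL_in1 // mulrC.
Qed.

Lemma Tp_r2map (a l : L) : Tp (r2map a l) = r1map a l.
Proof. by rewrite -Tp_r1map TpK. Qed.

Lemma isR2_Tp S : isR2 S <-> isR1 (vimg Tp S).
Proof.
have memTp phi : (phi \in vimg Tp S) = (Tp phi \in S).
  apply/memv_imgP/idP => [[psi psiS ->]|Tphi_S]; first by rewrite TpK.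
  by exists (Tp phi); rewrite ?TpK.
split=> -[l [l_neq0 lS]]; exists l; split=> // phi.
  rewrite memTp lS; split=> -[a phiE]; exists a; last by rewrite phiE Tp_r1map.
  by rewrite -(TpK phi) phiE Tp_r2map.
rewrite -[phi in phi \in S]TpK -memTp lS; split=> -[a phiE]; exists a.
  by rewrite -(TpK phi) phiE Tp_r1map.
by rewrite phiE Tp_r2map.
Qed.

(* For n >= 2, Tp does not induce the identity on points: Tp(r1map a 1) is a
   multiple of r1map a 1 only if a lies in F. *)
Lemma Tp_not_line : (1 < n)%N -> exists phi, Tp phi \notin <[phi]>%VS.
Proof.
move=> n_gt1; have [a a_notF] := exists_notin1 n_gt1.
exists (r1map a 1); rewrite Tp_r1map; apply/vlineP => -[k kE].
have trLa y : trL (a * y) = k%:A * a * trL y.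
  have := congr1 (fun f : E => f y) kE.
  by rewrite scale_lfunE r2mapE r1mapE !mul1r -mulrA mulr_algl.
have [x0 trx0_neq0] := trL_neq0 L.
have k_neq0 : k != 0.
  apply: contraNneq a_notF => k0; suff -> : a = 0 by rewrite rpred0.
  apply: (@trl_inj F L); apply/lfunP => y.
  by rewrite trlE trLa k0 scale0r !mul0r linear0 zero_lfunE.
have kA_neq0 : (k%:A : L) != 0 by rewrite scaler_eq0 (negbTE k_neq0) oner_eq0.
have aE : a = trL (a * x0) / (k%:A * trL x0).
  by rewrite trLa; field; rewrite kA_neq0 trx0_neq0.
move/negP: a_notF; apply; rewrite mem1_frob -/(frobL a); apply/eqP.
by rewrite [in LHS]aE rmorphM /= fmorphV rmorphM /= !frobL_trL frobL_alg -aE.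
Qed.

End Transpose.

Section DSubspaces.
Variables (F : finFieldType) (L : fieldExtType F).
Local Notation E := 'End(L).

Lemma Dsubspace_inv X : Dsubspace X ->
  exists g h : 'End(E), [/\ cancel h g, cancel g h, X = vimg g (Iv L),
    forall S, isR1 S <-> isR1 (vimg h S) & forall S, isR2 S <-> isR2 (vimg h S)].
Proof.
case=> g [kerg [fix1 [fix2 XE]]]; have kerg0 : lker g == 0%VS by apply/eqP.
pose h := (g^-1)%VF; have ghK : cancel h g := lker0_lfunVK kerg0.
have hgK : cancel g h := lker0_lfunK kerg0.
have fix_inv R : fixes_system g R -> forall S, R S <-> R (vimg h S).
  move=> fixR S; apply: iff_sym; apply: iff_trans (fixR (vimg h S)) _.
  by have := vimg_cancel ghK S; rewrite /vimg => ->.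
exists g, h; split=> //; try exact: fix_inv.
apply/vspaceP => w; apply/idP/memv_imgP => [/XE [l ->]|[u /mem_Iv [l ->] ->]].
  by exists (tmul l) => //; apply/mem_Iv; exists l.
by apply/XE; exists l.
Qed.

Lemma Collineation_lfun (f : 'End(E)) : bijective f -> Collineation f.
Proof.
move=> f_bij; split=> //; first exact: linearD.
by exists (idfun : {rmorphism F -> F}); split=> [|c v]; [exists idfun | rewrite linearZ].
Qed.

Lemma Involutory_conj (f g h : 'End(E)) : cancel h g -> cancel g h -> cancel f f ->
  (exists phi, f phi \notin <[phi]>%VS) -> Involutory (g \o f \o h)%VF.
Proof.
move=> ghK hgK fK [phi f_phi].
split=> [v|]; first by rewrite !comp_lfunE hgK fK ghK memv_line.
exists (g phi); rewrite !comp_lfunE hgK; apply: contra f_phi => /vlineP [k gfE].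
by apply/vlineP; exists k; rewrite -(hgK (f phi)) gfE linearZ /= hgK.
Qed.

Lemma maps_onto_vimg (f : 'End(E)) S : maps_onto f S (vimg f S).
Proof.
by move=> w; split=> [/memv_imgP [v vS ->]|[v [vS ->]]]; [exists v | exact: memv_img].
Qed.

Lemma spread_image_vimg (f f' : 'End(E)) (D1 D2 : {vspace E} -> Prop) :
  cancel f f' -> cancel f' f -> (forall T, D2 T <-> D1 (vimg f' T)) ->
  spread_image f D1 D2.
Proof.
move=> fK f'K D2E; split=> [S D1S|T D2T].
  by exists (vimg f S); split; [rewrite D2E vimg_cancel | exact: maps_onto_vimg].
exists (vimg f' T); split; first by rewrite -D2E.
by rewrite -{2}(vimg_cancel f'K T); exact: maps_onto_vimg.
Qed.

End DSubspaces.

Theorem theorem5p2 (F : finFieldType) (L : fieldExtType F) (n : nat)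
    (hL : \dim {:L} = n) (hn : (2 <= n)%N)
    (X : {vspace 'End(L)}) (hX : Dsubspace X) :
  exists D1 D2 : {vspace 'End(L)} -> Prop,
    [/\ DProps D1 (@isR1 F L) X, DProps D2 (@isR2 F L) X &
      exists Phi : 'End(L) -> 'End(L),
        [/\ Collineation Phi, Involutory Phi,
            (forall v, v \in X -> Phi v \in <[v]>%VS) &
            spread_image Phi D1 D2]].
Proof.
have [g [h [ghK hgK XE R1E R2E]]] := Dsubspace_inv hX.
have TpgK : cancel (Tp L \o h)%VF (g \o Tp L)%VF := comp_cancel ghK (@TpK F L).
have gTpK : cancel (g \o Tp L)%VF (Tp L \o h)%VF := comp_cancel (@TpK F L) hgK.
pose Phi := (g \o Tp L \o h)%VF.
have PhiK : cancel Phi Phi by move=> v; rewrite !comp_lfunE hgK TpK ghK.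
(* D_1(X), D_2(X): the standard spread moved by g and by g o Tp. *)
exists (fun S => Lspread (@mu_std F L) (vimg h S)),
       (fun S => Lspread (@mu_std F L) (vimg (Tp L \o h) S)); split.
- by rewrite XE; exact (DProps_conj ghK hgK R1E (DProps_std L)).
- have R2E' S : isR2 S <-> isR1 (vimg (Tp L \o h) S).
    by rewrite vimg_comp -isR2_Tp; exact: R2E.
  rewrite XE -[Iv L](Tp_Iv L) -vimg_comp.
  exact (DProps_conj TpgK gTpK R2E' (DProps_std L)).
exists Phi; split.
- by apply: Collineation_lfun; exists Phi.
- apply: Involutory_conj ghK hgK (@TpK F L) _.
  by apply: Tp_not_line; rewrite hL.
- rewrite XE => _ /memv_imgP [_ /mem_Iv [a ->] ->].
  by rewrite !comp_lfunE hgK Tp_tmul memv_line.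
apply: (spread_image_vimg PhiK PhiK) => T.
suff hPhiE : (h \o Phi = Tp L \o h)%VF by rewrite -vimg_comp hPhiE.
by apply/lfunP => v; rewrite !comp_lfunE hgK.
Qed.
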